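(* Let $(A;R)\in\mathcal C$ and let $F_1,\dots,F_r$ ($r\ge1$) be distinct closed sets of $PG(A;R)$, with $U=\bigcup_{i=1}^rF_i$. Let $\rho(F_1,\dots,F_r)$ be the number of $s\in R$ with $s\subseteq U$ but $s\not\subseteq F_i$ for every $i$. Then $$-\Delta(F_1,\dots,F_r)=\delta(U)-d(U)+\rho(F_1,\dots,F_r).$$ Consequently $\Delta(F_1,\dots,F_r)\le0$, and $\Delta(F_1,\dots,F_r)=0$ if and only if $U\le A$ and every $s\in R$ with $s\subseteq U$ is contained in some $F_i$.
   Context: A set system is a pair $(A;R)$ where $R$ is a set of finite non-empty subsets of $A$; for $X\subseteq A$, $R[X]=\{s\in R: s\subseteq X\}$ and $\delta(X)=|X|-|R[X]|$. $\mathcal C$ is the class of finite set systems with $\delta(X)\ge0$ for all $X\subseteq A$. $X\le A$ means $\delta(X)\le\delta(X')$ for all $X\subseteq X'\subseteq A$. Define $d(X)=\min\{\delta(Y):X\subseteq Y\subseteq A\}$ and $\mathrm{cl}(X)=\{y: d(X\cup\{y\})=d(X)\}$; $PG(A;R)$ is the pregeometry $(A,\mathrm{cl})$ with dimension function $d$; closed sets are $F$ with $\mathrm{cl}(F)=F$. For a family $F_i$ ($i\in I=\{1,\dots,r\}$) of distinct closed sets, put $F_S=\bigcap_{i\in S}F_i$ for $\emptyset\neq S\subseteq I$, $F_\emptyset=\bigcup_iF_i$, and $\Delta(F_1,\dots,F_r)=\sum_{S\subseteq I}(-1)^{|S|}d(F_S)$. *)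

From HB Require Import structures.
From mathcomp Require Import all_boot all_order all_algebra.
Set Implicit Arguments. Unset Strict Implicit. Unset Printing Implicit Defensive.
Import Order.TTheory GRing.Theory Num.Theory.
Local Open Scope ring_scope.

Section SetSystems.
Variable A : finType.
Variable R : {set {set A}}.

Definition set_system : Prop := forall s, s \in R -> s != set0.

Definition ss_RX (X : {set A}) : {set {set A}} := [set s in R | s \subset X].

Definition ss_delta (X : {set A}) : int := (#|X|%:Z - #|ss_RX X|%:Z)%R.

Definition in_C : Prop := set_system /\ forall X : {set A}, (0 <= ss_delta X)%R.

Definition ss_le (X : {set A}) : Prop :=
  forall X' : {set A}, X \subset X' -> (ss_delta X <= ss_delta X')%R.

(* d(X) = min { ss_delta(Y) : X ⊆ Y ⊆ A }  (seeded with ss_delta(A), which is in range) *)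
Definition ss_d (X : {set A}) : int :=
  \big[Num.min/ss_delta [set: A]]_(Y : {set A} | X \subset Y) ss_delta Y.

Definition ss_cl (X : {set A}) : {set A} := [set y | ss_d (y |: X) == ss_d X].

Definition ss_closed (F : {set A}) : Prop := ss_cl F = F.

Definition ss_FS (r : nat) (F : 'I_r -> {set A}) (S : {set 'I_r}) : {set A} :=
  if S == set0 then \bigcup_(i < r) F i else \bigcap_(i in S) F i.

Definition ss_Delta (r : nat) (F : 'I_r -> {set A}) : int :=
  \sum_(S : {set 'I_r}) (-1) ^+ #|S| * ss_d (ss_FS F S).

Definition ss_rho (r : nat) (F : 'I_r -> {set A}) : nat :=
  #|[set s in R | (s \subset \bigcup_(i < r) F i) &&
                  [forall i : 'I_r, ~~ (s \subset F i)]]|.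

End SetSystems.

From HB Require Import structures.
From mathcomp Require Import all_boot all_order all_algebra.
From mathcomp Require Import zify.
Import Order.TTheory GRing.Theory Num.Theory.
Local Open Scope ring_scope.

(* Write U for the union of the F_i and F_S for their intersections (S ≠ ∅).
   1. d(X) is the minimum of δ over the supersets of X; it equals δ(X)
      exactly when X ≤ A, and closed sets satisfy F ≤ A.
   2. δ is submodular, because R[X ∩ Y] = R[X] ∩ R[Y] and
      R[X] ∪ R[Y] ⊆ R[X ∪ Y]; hence self-sufficiency is stable under
      intersections and d(F_S) = |F_S| - |⋂_{i∈S} R[F_i]| for S ≠ ∅.
   3. Inclusion–exclusion, proved here by expanding ∏_i (1 - 1_{G_i}) and
      applied once to the F_i and once to the R[F_i], turns
      Δ = d(U) + Σ_{S≠∅} (-1)^|S| d(F_S) into d(U) - |U| + |⋃_i R[F_i]|.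
   4. R[U] is the disjoint union of ⋃_i R[F_i] and the ρ sets counted by ρ,
      whence -Δ = δ(U) - d(U) + ρ.  Both summands are non-negative, so
      Δ ≤ 0 with equality iff d(U) = δ(U) (that is, U ≤ A) and ρ = 0. *)

Section Dimension.
Variables (A : finType) (R : {set {set A}}).
Implicit Types X Y F : {set A}.

Lemma ss_d_le_delta X Y : X \subset Y -> ss_d R X <= ss_delta R Y.
Proof. by move=> sXY; apply: bigmin_le_cond. Qed.

Lemma ss_d_attained X : exists2 Y : {set A}, X \subset Y & ss_d R X = ss_delta R Y.
Proof.
rewrite /ss_d.
apply: (big_ind (fun v => exists2 Y : {set A}, X \subset Y & v = ss_delta R Y)).
- by exists setT; rewrite ?subsetT.
- move=> _ _ [Y1 sXY1 ->] [Y2 sXY2 ->].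
  by have [_|_] := leP (ss_delta R Y1) (ss_delta R Y2); [exists Y1 | exists Y2].
- by move=> Y sXY; exists Y.
Qed.

(* d is monotone, since a superset realising d(Y) is also a superset of X. *)
Lemma ss_d_mono X Y : X \subset Y -> ss_d R X <= ss_d R Y.
Proof.
move=> sXY; have [Z sYZ ->] := ss_d_attained Y.
exact/ss_d_le_delta/(subset_trans sXY).
Qed.

Lemma ss_leP X : ss_le R X <-> ss_d R X = ss_delta R X.
Proof.
split=> [leX | dX Y sXY]; last by rewrite -dX ss_d_le_delta.
apply/eqP; rewrite eq_le ss_d_le_delta //=.
by apply/bigmin_geP; split=> [|Y /leX //]; apply/leX/subsetT.
Qed.

(* Closed sets are self-sufficient: a superset realising d(F) lies in cl(F). *)
Lemma closed_ss_le F : ss_closed R F -> ss_le R F.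
Proof.
move=> clF; apply/ss_leP; have [Y sFY dF] := ss_d_attained F.
suff sYF : Y \subset F by rewrite dF; congr ss_delta; apply/eqP; rewrite eqEsubset sYF.
apply/subsetP=> y yY; rewrite -clF inE eq_le (ss_d_mono _ _ (subsetUr [set y] F)) andbT.
by rewrite dF ss_d_le_delta // subUset sub1set yY.
Qed.

End Dimension.

Section Submodularity.
Variables (A : finType) (R : {set {set A}}).
Implicit Types X Y F G : {set A}.

Lemma ss_RX_setI X Y : ss_RX R (X :&: Y) = ss_RX R X :&: ss_RX R Y.
Proof. by apply/setP=> s; rewrite !inE subsetI andbACA andbb. Qed.

Lemma ss_RX_setU X Y : ss_RX R X :|: ss_RX R Y \subset ss_RX R (X :|: Y).
Proof.
apply/subsetP=> s; rewrite !inE => /orP[] /andP[-> sX] /=.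
  exact: subset_trans sX (subsetUl _ _).
exact: subset_trans sX (subsetUr _ _).
Qed.

Lemma ss_delta_submod X Y :
  ss_delta R (X :|: Y) + ss_delta R (X :&: Y) <= ss_delta R X + ss_delta R Y.
Proof.
rewrite /ss_delta ss_RX_setI.
have := cardsUI X Y; have := cardsUI (ss_RX R X) (ss_RX R Y).
have := subset_leq_card (ss_RX_setU X Y); lia.
Qed.

Lemma ss_le_setI F G : ss_le R F -> ss_le R G -> ss_le R (F :&: G).
Proof.
move=> leF leG Y sFGY.
have delta_cap Z H : ss_le R H -> ss_delta R (Z :&: H) <= ss_delta R Z.
  by move=> leH; have := leH _ (subsetUr Z H); have := ss_delta_submod Z H; lia.
have -> : F :&: G = Y :&: F :&: G by rewrite -setIA (setIidPr sFGY).
exact: le_trans (delta_cap _ _ leG) (delta_cap _ _ leF).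
Qed.

Lemma ss_le_bigcap (I : finType) (S : {set I}) (H : I -> {set A}) :
  (forall i, ss_le R (H i)) -> ss_le R (\bigcap_(i in S) H i).
Proof.
move=> leH; apply: (big_ind (ss_le R)) => [Y|F G|i _]; last exact: leH.
- by rewrite subTset => /eqP ->.
- exact: ss_le_setI.
Qed.

Lemma ss_RX_bigcap (I : finType) (S : {set I}) (H : I -> {set A}) :
  S != set0 -> ss_RX R (\bigcap_(i in S) H i) = \bigcap_(i in S) ss_RX R (H i).
Proof.
case/set0Pn=> j jS; apply/setP=> s; rewrite inE; apply/andP/bigcapP.
  move=> [sR sH] i iS; rewrite inE sR (subset_trans sH) //; exact: bigcap_inf.
move=> sRH; split; first by have := sRH j jS; rewrite inE => /andP[].
by apply/bigcapsP=> i iS; have := sRH i iS; rewrite inE => /andP[].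
Qed.

End Submodularity.

Section InclusionExclusion.
Variables (T I : finType) (G : I -> {set T}).

Lemma prodr_indicator (Rg : comPzRingType) (P : pred I) (b : I -> bool) :
  \prod_(i | P i) ((b i)%:R : Rg) = [forall (i | P i), b i]%:R.
Proof.
case: (boolP [forall (i | P i), b i]) => [/forall_inP allb | /forall_inPn[i Pi nbi]].
  by apply: big1 => i /allb ->.
by rewrite (bigD1 i) //= (negbTE nbi) mul0r.
Qed.

(* Pointwise inclusion–exclusion, by expanding ∏_i (1 - 1_{G_i}). *)
Lemma indicator_incl_excl (x : T) :
  \sum_(J : {set I}) (-1) ^+ #|J| * ((x \in \bigcap_(i in J) G i)%:R : int)
  = (x \notin \bigcup_i G i)%:R.
Proof.
have prod_compl : \prod_i (- ((x \in G i)%:R : int) + 1) = (x \notin \bigcup_i G i)%:R.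
  under eq_bigr => i _ do have -> : - ((x \in G i)%:R : int) + 1 = (x \notin G i)%:R
    by case: (x \in G i).
  rewrite prodr_indicator; congr (nat_of_bool _ )%:R.
  apply/forallP/negP => [notG /bigcupP[i _ xG] | notU i]; first by case/negP: (notG i).
  by apply/negP=> xG; apply: notU; apply/bigcupP; exists i.
rewrite -prod_compl bigA_distr; apply: eq_bigr => J _.
rewrite -big_mkcond prodrN prodr_indicator; congr (_ * (nat_of_bool _)%:R).
exact/bigcapP/forall_inP.
Qed.

Lemma natr_card_sum (X : {set T}) : (#|X|%:R : int) = \sum_x (x \in X)%:R.
Proof. by rewrite -sumr_const big_mkcond; apply: eq_bigr => x _; case: ifP. Qed.

Lemma incl_excl :
  \sum_(J : {set I} | J != set0) (-1) ^+ #|J| * (#|\bigcap_(i in J) G i|%:R : int)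
  = - (#|\bigcup_i G i|%:R).
Proof.
have all_terms : \sum_(J : {set I}) (-1) ^+ #|J| * (#|\bigcap_(i in J) G i|%:R : int)
                 = #|T|%:R - #|\bigcup_i G i|%:R.
  under [LHS]eq_bigr => J _ do rewrite natr_card_sum mulr_sumr.
  rewrite exchange_big /=; under eq_bigr => x _ do rewrite indicator_incl_excl -in_setC.
  by rewrite -natr_card_sum -(cardsC (\bigcup_i G i)) natrD addrAC subrr add0r.
move: all_terms; rewrite (bigD1 set0) //= cards0 expr0 mul1r big_set0 cardsT.
exact: addrI.
Qed.

End InclusionExclusion.

Section DeltaFormula.
Variables (A : finType) (R : {set {set A}}) (r : nat) (F : 'I_r -> {set A}).
Hypothesis closedF : forall i, ss_closed R (F i).
Let U := \bigcup_(i < r) F i.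

(* For S ≠ ∅, F_S is self-sufficient, so d(F_S) = |F_S| - |⋂_{i∈S} R[F_i]|. *)
Lemma ss_d_FS (S : {set 'I_r}) : S != set0 ->
  ss_d R (ss_FS F S) =
  #|\bigcap_(i in S) F i|%:Z - #|\bigcap_(i in S) ss_RX R (F i)|%:Z.
Proof.
move=> nS; rewrite /ss_FS (negbTE nS).
rewrite (ss_leP _ _ _).1; last by apply: ss_le_bigcap => i; exact: closed_ss_le.
by rewrite /ss_delta ss_RX_bigcap.
Qed.

Lemma ss_Delta_closed :
  ss_Delta R F = ss_d R U - #|U|%:Z + #|\bigcup_(i < r) ss_RX R (F i)|%:Z.
Proof.
rewrite /ss_Delta (bigD1 set0) //= cards0 expr0 mul1r /ss_FS eqxx -/U.
under eq_bigr => S nS do rewrite -/(ss_FS F S) ss_d_FS // mulrBr -!natz.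
by rewrite sumrB !incl_excl opprK !natz addrA.
Qed.

Lemma card_ss_RX_union :
  #|ss_RX R U| = (#|\bigcup_(i < r) ss_RX R (F i)| + ss_rho R F)%N.
Proof.
rewrite -(cardsID (\bigcup_(i < r) ss_RX R (F i)) (ss_RX R U)) /ss_rho.
congr (_ + _)%N; apply: eq_card => s; rewrite !inE.
  apply/andP/idP => [[_ //] | inRF]; split=> //.
  have /bigcupP[i _] := inRF; rewrite inE => /andP[-> sF] /=.
  exact: subset_trans sF (bigcup_sup i _).
case sR: (s \in R) => //=; rewrite andbC; congr (_ && _).
apply/negP/forallP => [noF i | noF /bigcupP[i _]]; last by rewrite inE sR (negbTE (noF i)).
by apply/negP=> sF; apply: noF; apply/bigcupP; exists i; rewrite // inE sR.
Qed.

Lemma ss_rho_eq0P :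
  ss_rho R F = 0%N <-> forall s, s \in R -> s \subset U -> exists i, s \subset F i.
Proof.
rewrite /ss_rho; split=> [/cards0_eq/setP rho0 s sR sU | inF].
  move: (rho0 s); rewrite !inE sR sU /= => /negbT /forallPn[i].
  by rewrite negbK; exists i.
apply/eqP; rewrite cards_eq0; apply/eqP/setP=> s; rewrite !inE.
apply/negP=> /and3P[sR sU /forallP noF].
by have [i sF] := inF s sR sU; move: (noF i); rewrite sF.
Qed.

End DeltaFormula.

Theorem mainTheorem7 (A : finType) (R : {set {set A}}) (r : nat)
  (F : 'I_r -> {set A}) :
  in_C R -> (0 < r)%N -> injective F -> (forall i, ss_closed R (F i)) ->
  let U := \bigcup_(i < r) F i in
  [/\ - ss_Delta R F = ss_delta R U - ss_d R U + (ss_rho R F)%:Z,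
      ss_Delta R F <= 0 &
      (ss_Delta R F = 0 <->
        (ss_le R U /\
         forall s, s \in R -> s \subset U -> exists i, s \subset F i))].
Proof.
move=> _ _ _ closedF U.
have formula : - ss_Delta R F = ss_delta R U - ss_d R U + (ss_rho R F)%:Z.
  by rewrite ss_Delta_closed // -/U /ss_delta card_ss_RX_union; lia.
have dU_le : ss_d R U <= ss_delta R U by apply: ss_d_le_delta.
split=> //; first lia.
rewrite ss_leP -ss_rho_eq0P; lia.
Qed.
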